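(* Let $\Theta$ be a well-formed System $\mathsf{F_\wedge}$ context, $S$ an $\mathsf{F_\wedge}$ type over $\Theta$, and $T,T'$ $\mathsf{F_\wedge}$ types over $\Theta, X <: S$. If $\Theta, X <: S \vdash T <: T'$, then $\Theta \vdash \forall X.\,T[X \wedge S/X] <: \forall X.\,T'[X \wedge S/X]$.
   Context: System $\mathsf{F_\wedge}$: raw types $T ::= \top \mid X \mid T \to T \mid \forall X.T \mid T \wedge T$ ($X$ ranging over type variables), identified up to $\alpha$-conversion; $\forall X.T$ abbreviates $\forall (X<:\top).T$. A context $\Theta$ is a finite sequence of assumptions $X <: T$ (type variable with bound $T$) or $x : T$ (term variable of type $T$), with distinct variables, each type being well-formed (free type variables declared earlier) over the preceding part. Subtyping judgements $\Theta \vdash S <: T$ are generated by: (Var) $\Theta, X<:T, \Theta' \vdash X <: T$; (Top) $\Theta \vdash T <: \top$; (Refl) $\Theta \vdash T <: T$; (Trans) from $\Theta\vdash T<:T'$ and $\Theta \vdash T' <: T''$ infer $\Theta \vdash T <: T''$; ($\to$) from $\Theta \vdash S' <: S$ and $\Theta \vdash T <: T'$ infer $\Theta \vdash S \to T <: S' \to T'$; ($\forall$) from $\Theta, X <: \top \vdash S <: T$ infer $\Theta \vdash \forall X.S <: \forall X.T$; (meet) $\Theta \vdash S \wedge S' <: S$, $\Theta \vdash S\wedge S' <: S'$, and from $\Theta \vdash T <: S$ and $\Theta \vdash T <: S'$ infer $\Theta \vdash T <: S \wedge S'$. $T[U/X]$ denotes capture-avoiding substitution. *)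

From Stdlib Require Import List Arith.
Import ListNotations.

(* Raw types: Top | X | T -> T | forall X. T  (bound Top) | T /\ T.
   Type variables are de Bruijn indices, so alpha-equivalent types are equal. *)
Inductive ty : Type :=
  | TTop : ty
  | TVar : nat -> ty
  | TArr : ty -> ty -> ty
  | TAll : ty -> ty
  | TMeet : ty -> ty -> ty.

Definition up_ren (xi : nat -> nat) : nat -> nat :=
  fun n => match n with 0 => 0 | S m => S (xi m) end.

Fixpoint ren (xi : nat -> nat) (T : ty) : ty :=
  match T with
  | TTop => TTop
  | TVar n => TVar (xi n)
  | TArr A B => TArr (ren xi A) (ren xi B)
  | TAll B => TAll (ren (up_ren xi) B)
  | TMeet A B => TMeet (ren xi A) (ren xi B)
  end.

Definition shift (T : ty) : ty := ren S T.

Definition up_sub (sigma : nat -> ty) : nat -> ty :=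
  fun n => match n with 0 => TVar 0 | S m => shift (sigma m) end.

Fixpoint subst (sigma : nat -> ty) (T : ty) : ty :=
  match T with
  | TTop => TTop
  | TVar n => sigma n
  | TArr A B => TArr (subst sigma A) (subst sigma B)
  | TAll B => TAll (subst (up_sub sigma) B)
  | TMeet A B => TMeet (subst sigma A) (subst sigma B)
  end.

(* Contexts are lists with the MOST RECENT
   entry at the head; type-variable index k refers to the k-th type-variable
   binding counting from the head (term bindings are skipped). *)
Inductive entry : Type :=
  | TBind : ty -> entry
  | VBind : ty -> entry.

Definition ctx := list entry.

Fixpoint ntvars (G : ctx) : nat :=
  match G with
  | [] => 0
  | TBind _ :: G' => S (ntvars G')
  | VBind _ :: G' => ntvars G'
  end.

(* bound of type variable k, expressed over the whole context G *)
Fixpoint lookup (G : ctx) (k : nat) : option ty :=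
  match G with
  | [] => None
  | TBind T :: G' =>
      match k with
      | 0 => Some (shift T)
      | S k' => option_map shift (lookup G' k')
      end
  | VBind _ :: G' => lookup G' k
  end.

Fixpoint wf_ty (n : nat) (T : ty) : Prop :=
  match T with
  | TTop => True
  | TVar k => k < n
  | TArr A B => wf_ty n A /\ wf_ty n B
  | TAll B => wf_ty (S n) B
  | TMeet A B => wf_ty n A /\ wf_ty n B
  end.

Fixpoint wf_ctx (G : ctx) : Prop :=
  match G with
  | [] => True
  | TBind T :: G' => wf_ctx G' /\ wf_ty (ntvars G') T
  | VBind T :: G' => wf_ctx G' /\ wf_ty (ntvars G') T
  end.

Inductive sub : ctx -> ty -> ty -> Prop :=
  | S_Var : forall G k U, lookup G k = Some U -> sub G (TVar k) U
  | S_Top : forall G T, sub G T TTop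
  | S_Refl : forall G T, sub G T T
  | S_Trans : forall G T T' T'', sub G T T' -> sub G T' T'' -> sub G T T''
  | S_Arr : forall G S S' T T', sub G S' S -> sub G T T' -> sub G (TArr S T) (TArr S' T')
  | S_All : forall G S T, sub (TBind TTop :: G) S T -> sub G (TAll S) (TAll T)
  | S_MeetL : forall G S S', sub G (TMeet S S') S
  | S_MeetR : forall G S S', sub G (TMeet S S') S'
  | S_Meet : forall G T S S', sub G T S -> sub G T S' -> sub G T (TMeet S S').

(* The substitution [X /\ S / X] performed under the binder forall X:
   in the context (G, X <: Top) the variable 0 (= X) is replaced by
   X /\ S, where S (a type over G) is weakened past the new binder. *)
Definition meet_sub (S : ty) : nat -> ty :=
  fun n => match n with 0 => TMeet (TVar 0) (shift S) | m => TVar m end.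

From Stdlib Require Import List.
Import ListNotations.

(* The substitution [X /\ S / X] maps the context (G, X <: S) into (G, X <: Top):
   every variable is sent to a subtype of the image of its bound, since
   X /\ S <: S and the other variables and their bounds are untouched (S does
   not mention X).  Subtyping is stable under any such substitution, by
   induction on derivations, so G, X <: Top |- T[X /\ S/X] <: T'[X /\ S/X], and
   the rule for forall concludes. *)

Lemma ren_ext (T : ty) (xi zeta : nat -> nat) :
  (forall n, xi n = zeta n) -> ren xi T = ren zeta T.
Proof.
  revert xi zeta; induction T; intros xi zeta H; simpl; f_equal; auto.
  apply IHT; intros [|n]; simpl; auto.
Qed.

Lemma subst_ext (T : ty) (s t : nat -> ty) :
  (forall n, s n = t n) -> subst s T = subst t T.
Proof.
  revert s t; induction T; intros s t H; simpl; f_equal; auto.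
  apply IHT; intros [|n]; simpl; auto.
  rewrite H; reflexivity.
Qed.

Lemma ren_ren (T : ty) (xi zeta : nat -> nat) :
  ren xi (ren zeta T) = ren (fun n => xi (zeta n)) T.
Proof.
  revert xi zeta; induction T; intros xi zeta; simpl; f_equal; auto.
  rewrite IHT; apply ren_ext; intros [|n]; reflexivity.
Qed.

Lemma subst_ren (T : ty) (s : nat -> ty) (xi : nat -> nat) :
  subst s (ren xi T) = subst (fun n => s (xi n)) T.
Proof.
  revert s xi; induction T; intros s xi; simpl; f_equal; auto.
  rewrite IHT; apply subst_ext; intros [|n]; reflexivity.
Qed.

Lemma ren_subst (T : ty) (s : nat -> ty) (xi : nat -> nat) :
  ren xi (subst s T) = subst (fun n => ren xi (s n)) T.
Proof.
  revert s xi; induction T; intros s xi; simpl; f_equal; auto.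
  rewrite IHT; apply subst_ext; intros [|n]; simpl; try reflexivity.
  unfold shift; rewrite !ren_ren; apply ren_ext; reflexivity.
Qed.

Lemma subst_TVar_ren (T : ty) (xi : nat -> nat) :
  subst (fun n => TVar (xi n)) T = ren xi T.
Proof.
  revert xi; induction T; intros xi; simpl; f_equal; auto.
  rewrite <- IHT; apply subst_ext; intros [|n]; reflexivity.
Qed.

Lemma subst_up_shift (T : ty) (s : nat -> ty) :
  subst (up_sub s) (shift T) = shift (subst s T).
Proof.
  unfold shift at 1; rewrite subst_ren.
  unfold shift; rewrite ren_subst.
  apply subst_ext; reflexivity.
Qed.

Lemma sub_ren (G : ctx) (T T' : ty) :
  sub G T T' ->
  forall (G' : ctx) (xi : nat -> nat),
    (forall k B, lookup G k = Some B -> lookup G' (xi k) = Some (ren xi B)) ->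
    sub G' (ren xi T) (ren xi T').
Proof.
  induction 1; intros G' xi Hxi; simpl; eauto using sub.
  apply S_All, IHsub; intros [|k] B HB; simpl in *.
  - injection HB as <-; reflexivity.
  - destruct (lookup G k) as [C|] eqn:HC; simpl in HB; [|discriminate].
    injection HB as <-.
    rewrite (Hxi _ _ HC); simpl; f_equal.
    unfold shift; rewrite !ren_ren; apply ren_ext; reflexivity.
Qed.

Lemma sub_weaken (G : ctx) (X A B : ty) :
  sub G A B -> sub (TBind X :: G) (shift A) (shift B).
Proof.
  intro HAB; apply (sub_ren _ _ _ HAB).
  intros k C HC; simpl; rewrite HC; reflexivity.
Qed.

Lemma sub_subst (G : ctx) (T T' : ty) :
  sub G T T' ->
  forall (G' : ctx) (s : nat -> ty),
    (forall k B, lookup G k = Some B -> sub G' (s k) (subst s B)) ->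
    sub G' (subst s T) (subst s T').
Proof.
  induction 1; intros G' s Hs; simpl; eauto using sub.
  apply S_All, IHsub; intros [|k] B HB; simpl in *.
  - injection HB as <-; apply S_Top.
  - destruct (lookup G k) as [C|] eqn:HC; simpl in HB; [|discriminate].
    injection HB as <-.
    rewrite subst_up_shift; apply sub_weaken; auto.
Qed.

Lemma subst_meet_sub_shift (U T : ty) :
  subst (meet_sub U) (shift T) = shift T.
Proof.
  unfold shift at 1; rewrite subst_ren; apply subst_TVar_ren.
Qed.

Lemma meet_sub_lookup (G : ctx) (U : ty) (k : nat) (B : ty) :
  lookup (TBind U :: G) k = Some B ->
  sub (TBind TTop :: G) (meet_sub U k) (subst (meet_sub U) B).
Proof.
  destruct k as [|k]; simpl; intro HB.
  - injection HB as <-; rewrite subst_meet_sub_shift; apply S_MeetR.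
  - destruct (lookup G k) as [C|] eqn:HC; simpl in HB; [|discriminate].
    injection HB as <-.
    rewrite subst_meet_sub_shift; apply S_Var; simpl; rewrite HC; reflexivity.
Qed.

Theorem lemma3p1 :
  forall (G : ctx) (U T T' : ty),
    wf_ctx G ->
    wf_ty (ntvars G) U ->
    wf_ty (Datatypes.S (ntvars G)) T ->
    wf_ty (Datatypes.S (ntvars G)) T' ->
    sub (TBind U :: G) T T' ->
    sub G (TAll (subst (meet_sub U) T)) (TAll (subst (meet_sub U) T')).
Proof.
  intros G U T T' _ _ _ _ HTT'.
  apply S_All, (sub_subst _ _ _ HTT').
  apply meet_sub_lookup.
Qed.
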